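(* Let $n$ be a positive integer and let $\alpha,\beta,\gamma,\delta$ be distinct complex numbers satisfying $(\alpha+\beta)(\gamma+\delta)=2(\alpha\beta+\gamma\delta)$. Then $$\lim_{k\to\alpha}\frac{d^n}{dk^n}\,\frac{(k-\gamma)^n(k-\delta)^n}{(k-\beta)^{n+1}}=\begin{cases}0 & n\text{ odd},\\[4pt] (-1)^{n/2}\dfrac{(\gamma-\delta)^n}{(\alpha-\beta)^{n+1}}\,\prod_{i=1}^{n/2}(2i-1)^2 & n\text{ even}.\end{cases}$$ *)

From mathcomp Require Import all_boot all_order all_algebra.
From mathcomp Require Import boolp classical_sets reals topology normedtype derive.
From mathcomp Require Import complex.
Import GRing.Theory Num.Theory numFieldNormedType.Exports.
Local Open Scope ring_scope.

(* The complex numbers, built as R[i] over a real type R (so complete,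
   i.e. isomorphic to the usual field C), seen as a numClosedFieldType
   so that MathComp-Analysis equips it with its standard normed
   (hence topological) structure over itself; derivatives of
   functions C -> C are then complex derivatives. *)
Definition Cplx (R : realType) : numClosedFieldType := R[i].

From HB Require Import structures.
From mathcomp Require Import all_boot all_order all_algebra.
From mathcomp Require Import boolp classical_sets functions reals topology normedtype derive.
From mathcomp Require Import complex.
From mathcomp Require Import ring zify.
Import Order.TTheory GRing.Theory Num.Theory numFieldNormedType.Exports.
Local Open Scope ring_scope.
Local Open Scope classical_set_scope.

(* The hypothesis says that {alpha, beta} and {gamma, delta} are harmonic pairs.
   It yields (k - gamma)(k - delta)(alpha - beta)^2 = U (k - beta)^2 + V (k - alpha)^2
   with U = (alpha - gamma)(alpha - delta), V = (beta - gamma)(beta - delta), and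
   4 U V = - ((gamma - delta)(alpha - beta))^2.  Expanding the n-th power, the
   function becomes a sum of terms c_i (k - alpha)^(2i) (k - beta)^(2(n-i)) / (k - beta)^(n+1).
   Writing every derivative as P / (k - beta)^(M+1) with P a polynomial, one sees
   that at k = alpha the n-th derivative of the i-th term vanishes unless 2i = n,
   in which case it is c_i n! / (alpha - beta); the central binomial
   coefficient then combines with (U V)^(n/2) into the stated product. *)

Section CentralBinomial.
Local Open Scope nat_scope.

Lemma fact_double m :
  (2 * m)`! = 2 ^ m * m`! * \prod_(1 <= i < m.+1) (2 * i - 1).
Proof.
elim: m => [|m IH]; first by rewrite big_geq.
rewrite big_nat_recr //= mulnS !factS IH expnS.
have -> : 2 + 2 * m - 1 = (2 * m).+1 by lia.
ring.
Qed.

Lemma bin_double_fact m :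
  'C(2 * m, m) * (2 * m)`! = 4 ^ m * \prod_(1 <= i < m.+1) (2 * i - 1) ^ 2.
Proof.
have bin_m : 'C(2 * m, m) * (m`! * m`!) = (2 * m)`!.
  by have := @bin_fact (2 * m) m; rewrite (_ : 2 * m - m = m); [apply; lia|lia].
apply/eqP; rewrite -(eqn_pmul2r (_ : 0 < m`! * m`!)) ?muln_gt0 ?fact_gt0 //.
rewrite mulnAC bin_m fact_double big_split /=.
apply/eqP; rewrite (expnMn 2 2 m); ring.
Qed.
End CentralBinomial.

Section QuotientNumerator.
Context {R : comNzRingType}.
Implicit Types (p q : {poly R}) (a b : R).

(* [derivq b M p / (X - b)^(M+1)] is the derivative of [p / (X - b)^M]. *)
Definition derivq b (M : nat) p := p^`() * ('X - b%:P) - M%:R *: p.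

Fixpoint derivqn b (M j : nat) p : {poly R} :=
  if j is j'.+1 then derivqn b M.+1 j' (derivq b M p) else p.

Lemma derivq_is_linear b (M : nat) : linear (derivq b M).
Proof.
move=> c p q; rewrite /derivq derivD derivZ mulrDl -scalerAl scalerDr scalerBr.
by rewrite !scalerA [M%:R * _]mulrC opprD addrACA.
Qed.

Lemma derivqn_is_linear b (M j : nat) : linear (derivqn b M j).
Proof. by elim: j M => [|j IH] M c p q //=; rewrite derivq_is_linear IH. Qed.
End QuotientNumerator.

HB.instance Definition _ (R : comNzRingType) (b : R) (M j : nat) :=
  GRing.isLinear.Build R {poly R} {poly R} _ (derivqn b M j) (@derivqn_is_linear R b M j).

Section TwoRootMonomials.
Context {R : comNzRingType}.
Implicit Types (a b : R).

Definition monom2 a b (i e : nat) : {poly R} := ('X - a%:P) ^+ i * ('X - b%:P) ^+ e.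

Lemma derivq_monom2 a b (M i e : nat) :
  derivq b M (monom2 a b i e) =
  i%:R *: monom2 a b i.-1 e.+1 + (e%:R - M%:R) *: monom2 a b i e.
Proof.
rewrite /derivq /monom2 derivM !deriv_exp !derivXsubC !mul1r -!mul_polyC polyCB !polyC_natr.
case: i => [|i]; case: e => [|e] /=; rewrite ?mulr0n ?mul0r ?mulr0 ?add0r ?addr0 ?exprS ?expr0;
  ring.
Qed.

Lemma derivqn_monom2_at a b (M j i e : nat) : (i + e).+1 = (M + j)%N ->
  (derivqn b M j (monom2 a b i e)).[a] =
  if i == j then j`!%:R * (a - b) ^+ (M + j).-1 else 0.
Proof.
elim: j M i e => [|j IH] M i e deg /=.
  rewrite /monom2 !hornerE subrr -(addn0 M) -deg /=.
  by case: i {deg} => [|i]; rewrite ?expr0 ?mul1r // expr0n mul0r.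
rewrite derivq_monom2 linearD !linearZ !hornerE /= (IH M.+1 i e); last by rewrite addSnnS.
case: i deg => [|i] deg /=.
  rewrite mul0r add0r; case: eqP => [j0|_]; last by rewrite mulr0.
  have -> : e = M by lia.
  by rewrite subrr mul0r.
rewrite IH ?eqSS; last by lia.
have [<-|ij] := eqVneq i j.
  by rewrite gtn_eqF // mulr0 addr0 factS natrM mulrA addSnnS.
rewrite mulr0 add0r; case: eqP => [ij1|_]; last by rewrite mulr0.
have -> : e = M by lia.
by rewrite subrr mul0r.
Qed.

Lemma derivqn_sqr_pow_at a b (U V : R) (n : nat) :
  (derivqn b n.+1 n ((U *: ('X - b%:P) ^+ 2 + V *: ('X - a%:P) ^+ 2) ^+ n)).[a] =
  if odd n then 0 else ('C(n, n./2) * n`!)%:R * (U * V) ^+ n./2 * (a - b) ^+ (2 * n).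
Proof.
rewrite exprDn linear_sum horner_sum.
have term (i : 'I_n.+1) :
    (U *: ('X - b%:P) ^+ 2) ^+ (n - i) * (V *: ('X - a%:P) ^+ 2) ^+ i *+ 'C(n, i) =
    (U ^+ (n - i) * V ^+ i *+ 'C(n, i)) *: monom2 a b (2 * i) (2 * (n - i)).
  by rewrite /monom2 mulrC !exprZn -scalerAl -scalerAr scalerA -scalerMnl !exprM [V ^+ _ * _]mulrC.
rewrite (eq_bigr (fun i : 'I_n.+1 => if (2 * i == n)%N then
   U ^+ (n - i) * V ^+ i *+ 'C(n, i) * (n`!%:R * (a - b) ^+ (2 * n)) else 0)); last first.
  move=> i _; rewrite term linearZ hornerZ derivqn_monom2_at; last by have := ltn_ord i; lia.
  rewrite (_ : (n.+1 + n).-1 = 2 * n)%N; last by lia.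
  by case: ifP; rewrite ?mulr0.
rewrite -big_mkcond /=; have [n_odd|n_even] := boolP (odd n).
  by rewrite big_pred0 // => i; apply: contraTF n_odd => /eqP <-; rewrite oddM.
have n2 : n = (2 * n./2)%N by rewrite -[LHS]odd_double_half (negbTE n_even) mul2n.
have half_lt : (n./2 < n.+1)%N by lia.
rewrite (big_pred1 (Ordinal half_lt)) => [/=|i]; last by rewrite /= -val_eqE /=; apply/eqP/eqP; lia.
have -> : (n - n./2 = n./2)%N by lia.
by rewrite -exprMn natrM mulrnAl -mulr_natr; ring.
Qed.
End TwoRootMonomials.

Section QuotientDerivative.
Context {C : numFieldType}.
Implicit Types (Q : {poly C}) (b k : C).

Lemma horner_derivable Q k : derivable (horner Q) k 1.
Proof.
elim/poly_ind: Q => [|Q r ih].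
  by rewrite (_ : horner 0 = cst 0); [exact: derivable_cst|apply/funext=> y; rewrite horner0].
rewrite (_ : horner _ = horner Q * id + cst r); last by apply/funext => y /=; rewrite !hornerE.
by apply: derivableD; [apply: derivableM|exact: derivable_cst].
Qed.

Global Instance is_derive_horner Q k : is_derive k 1 (horner Q) Q^`().[k].
Proof.
apply: DeriveDef; first exact: horner_derivable.
elim/poly_ind: Q => [|Q r ih].
  rewrite (_ : horner 0 = cst 0); last by apply/funext=> y; rewrite horner0.
  by rewrite derive_cst deriv0 horner0.
rewrite (_ : horner _ = horner Q * id + cst r); last by apply/funext => y /=; rewrite !hornerE.
rewrite deriveD ?deriveM ?derive_id ?derive_cst ?ih; last first.
- exact: derivable_cst.
- by apply: derivableM; [exact: horner_derivable|exact: derivable_id].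
- exact: derivable_id.
- exact: horner_derivable.
rewrite derivD derivC derivM derivX !hornerE /= [_%:A]mulr1 [_ *: _]mulrC.
exact: addrC.
Qed.

Lemma is_derive_invXsubC_exp b (M : nat) k : k != b ->
  is_derive k 1 (fun x => ((x - b) ^+ M)^-1) (- M%:R / (k - b) ^+ M.+1).
Proof.
move=> kb; have kb0 : k - b != 0 by rewrite subr_eq0.
have dX : is_derive k 1 (fun x => (x - b) ^+ M) (M%:R * (k - b) ^+ M.-1).
  have -> : (fun x => (x - b) ^+ M) = (id - cst b) ^+ M by apply/funext => x; rewrite exprfctE.
  by apply: is_derive_eq; rewrite subr0 [_ *: _]mulr1.
have [dXd _] := dX; have kbM : (k - b) ^+ M != 0 by exact: expf_neq0.
apply: DeriveDef; first exact: derivableV.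
rewrite deriveV // derive_val [_ *: _]mulrC.
case: M {dX dXd kbM} => [|M] /=; first by rewrite !(mul0r, oppr0).
by rewrite !exprS; field; rewrite expf_neq0.
Qed.

Lemma is_derive_quot Q b (M : nat) k : k != b ->
  is_derive k 1 (fun x => Q.[x] / (x - b) ^+ M)
    ((derivq b M Q).[k] / (k - b) ^+ M.+1).
Proof.
move=> kb; have kb0 : k - b != 0 by rewrite subr_eq0.
have := is_deriveM (is_derive_horner Q k) (is_derive_invXsubC_exp b M k kb).
rewrite (_ : horner Q * _ = fun x => Q.[x] / (x - b) ^+ M) //.
move/is_derive_eq; apply; rewrite /derivq !hornerE /= /GRing.scale /=.
by rewrite exprS; field; rewrite expf_neq0.
Qed.

Lemma near_neq b k : k != b -> \forall x \near k, x != b.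
Proof.
move=> kb; exists `|k - b|; first by rewrite /= normr_gt0 subr_eq0.
by move=> x /= kx; apply: contraTneq kx => ->; rewrite ltxx.
Qed.

Lemma derive1n_quot {f : C -> C} {Q b} {M : nat} (j : nat) :
  (forall x, x != b -> f x = Q.[x] / (x - b) ^+ M) ->
  forall x, x != b -> derive1n j f x = (derivqn b M j Q).[x] / (x - b) ^+ (M + j).
Proof.
elim: j f Q M => [|j IH] f Q M fE x xb; first by rewrite addn0 /= fE.
rewrite derive1Sn /= -addSnnS; apply: IH => // y yb.
rewrite derive1E (@near_eq_derive _ _ _ f (fun x => Q.[x] / (x - b) ^+ M)).
  by have dq := is_derive_quot Q b M y yb; rewrite derive_val.
by near=> z; apply: fE; near: z; exact: near_neq.
Unshelve. all: by end_near.
Qed.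

Lemma quot_cvg {f : C -> C} {Q b} {M : nat} {a} : a != b ->
  (forall x, x != b -> f x = Q.[x] / (x - b) ^+ M) ->
  f x @[x --> a^'] --> Q.[a] / (a - b) ^+ M.
Proof.
move=> ab fE.
have : {for a, continuous (fun x => Q.[x] / (x - b) ^+ M)}.
  apply/differentiable_continuous/derivable1_diffP.
  by case: (is_derive_quot Q b M a ab).
move/continuous_withinNx; apply: cvg_trans; apply: near_eq_cvg.
by near=> x; rewrite fE //; near: x; apply: cvg_within; exact: near_neq.
Unshelve. all: by end_near.
Qed.
End QuotientDerivative.

Section HarmonicPairs.
Context {R : comNzRingType}.
Variables a b g d : R.
Hypothesis harmonic : (a + b) * (g + d) = 2 * (a * b + g * d).

Lemma harmonic_decomp k :
  (k - g) * (k - d) * (a - b) ^+ 2 =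
  (a - g) * (a - d) * (k - b) ^+ 2 + (b - g) * (b - d) * (k - a) ^+ 2.
Proof.
apply/eqP; rewrite -subr_eq0; apply/eqP.
have -> : (k - g) * (k - d) * (a - b) ^+ 2 -
    ((a - g) * (a - d) * (k - b) ^+ 2 + (b - g) * (b - d) * (k - a) ^+ 2) =
    ((a + b) * (g + d) - 2 * (a * b + g * d)) * ((k - a) * (k - b)) by ring.
by rewrite harmonic subrr mul0r.
Qed.

Lemma harmonic_coef_mul :
  4 * ((a - g) * (a - d) * ((b - g) * (b - d))) = - ((g - d) * (a - b)) ^+ 2.
Proof.
have -> : 4 * ((a - g) * (a - d) * ((b - g) * (b - d))) =
    - ((g - d) * (a - b)) ^+ 2 + ((a + b) * (g + d) - 2 * (a * b + g * d)) ^+ 2 by ring.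
by rewrite harmonic subrr expr0n addr0.
Qed.

Lemma harmonic_central_coef n : ~~ odd n ->
  ('C(n, n./2) * n`!)%:R * ((a - g) * (a - d) * ((b - g) * (b - d))) ^+ n./2 =
  (-1) ^+ n./2 * (g - d) ^+ n * (\prod_(1 <= i < n./2.+1) (2 * i - 1) ^ 2)%:R * (a - b) ^+ n.
Proof.
move=> n_even; set m := n./2.
have n2 : n = (2 * m)%N by rewrite -[LHS]odd_double_half (negbTE n_even) mul2n.
rewrite {1 2}n2 bin_double_fact natrM natrX mulrAC -exprMn harmonic_coef_mul.
by rewrite -[in LHS]mulN1r [in LHS]exprMn -[in LHS]exprM -n2 exprMn mulrA mulrAC.
Qed.
End HarmonicPairs.

Lemma harmonic_pow_horner {F : fieldType} {a b g d : F} (k : F) (n : nat) : a != b ->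
  (a + b) * (g + d) = 2 * (a * b + g * d) ->
  (k - g) ^+ n * (k - d) ^+ n =
  ((a - b) ^- (2 * n) *:
    ((a - g) * (a - d) *: ('X - b%:P) ^+ 2 + (b - g) * (b - d) *: ('X - a%:P) ^+ 2) ^+ n).[k].
Proof.
move=> ab harmonic; have ab2 : (a - b) ^+ 2 != 0 by rewrite expf_neq0 // subr_eq0.
rewrite -exprMn -[(k - g) * _](mulfK ab2) harmonic_decomp // hornerZ horner_exp.
by rewrite hornerD !hornerZ !horner_exp !hornerXsubC exprMn exprVn -exprM mulrC.
Qed.

Theorem theorem7 (R : realType) (n : nat) (alpha beta gamma delta : Cplx R) :
  (0 < n)%N ->
  alpha != beta -> alpha != gamma -> alpha != delta ->
  beta != gamma -> beta != delta -> gamma != delta ->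
  (alpha + beta) * (gamma + delta) = 2 * (alpha * beta + gamma * delta) ->
  (derive1n n (fun k : Cplx R =>
       (k - gamma) ^+ n * (k - delta) ^+ n / (k - beta) ^+ n.+1)) k
    @[k --> alpha^'] -->
  (if odd n then 0
   else (-1) ^+ (n./2) * (gamma - delta) ^+ n / (alpha - beta) ^+ n.+1
        * ((\prod_(1 <= i < (n./2).+1) (2 * i - 1) ^ 2)%N)%:R).
Proof.
move=> _ ab _ _ _ _ _ harmonic.
have pow_ab_neq0 k : (alpha - beta) ^+ k != 0 by rewrite expf_neq0 // subr_eq0.
have fE k (_ : k != beta) := congr1 (fun z => z / (k - beta) ^+ n.+1)
  (harmonic_pow_horner k n ab harmonic).
apply: cvg_trans (quot_cvg ab (derive1n_quot n fE)) _.
rewrite linearZ hornerZ derivqn_sqr_pow_at; case: ifP => [_|/negbT n_even].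
  by rewrite !(mulr0, mul0r).
rewrite [_ ^- _ * _]mulrC (mulfK (pow_ab_neq0 _)) harmonic_central_coef //.
rewrite addnC exprD invfM mulrA (mulfK (pow_ab_neq0 _)) mulrAC.
exact: cvg_refl.
Qed.
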